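(* Let $\mathcal{H}$ be a real Hilbert space, let $N\geq 1$, let $f_1,\ldots,f_N\in\Gamma_0(\mathcal{H})$, and let $\mathcal{P}\subset\Delta_N$ be a nonempty closed convex set. Define $f\colon\mathcal{H}^N\to\mathbb{R}\cup\{+\infty\}$ by $f(\mathbf{x})=\sup_{p\in\mathcal{P}}\sum_{i=1}^N p_i f_i(x_i)$ for $\mathbf{x}=(x_1,\ldots,x_N)$. Let $\mathbf{x}\in\mathcal{H}^N$ and $\lambda>0$. Then the following hold. (i) If for every $i\in\{1,\ldots,N\}$, $f_i(x)=\langle a_i,x\rangle+\xi_i$ with $a_i\in\mathcal{H}\setminus\{0\}$ and $\xi_i\in\mathbb{R}$, then the problem $\min_{p\in\mathcal{P}}\frac12 p^\top Dp-p^\top\beta$, where $D=\mathrm{diag}(\lambda\|a_1\|^2,\ldots,\lambda\|a_N\|^2)$ and $\beta=(\langle a_i,x_i\rangle+\xi_i)_{i=1}^N$, has a unique solution $\overline{p}\in\mathcal{P}$, and $P_\lambda f(\mathbf{x})=(x_i-\lambda\overline{p}_i a_i)_{i=1}^N$. (ii) If $\mathcal{P}=\Delta_N$ and for every $i\in\{1,\ldots,N\}$, $f_i(x)=\|x-\xi_i\|^2$ with $\xi_i\in\mathcal{H}$, then $P_\lambda f(\mathbf{x})=\left(\frac{x_i+2\lambda\overline{p}_i\xi_i}{2\lambda\overline{p}_i+1}\right)_{i=1}^N$, where $\overline{p}\in\Delta_N$ is any solution of $\max_{p\in\Delta_N}\ell(p):=\sum_{i=1}^N\frac{p_i}{1+2\lambda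 p_i}\alpha_i$ with $\alpha_i=\|x_i-\xi_i\|^2$ for every $i$.
   Context: $\Gamma_0(\mathcal{H})$ is the set of proper, lower semicontinuous, convex functions $\mathcal{H}\to\mathbb{R}\cup\{+\infty\}$. $\Delta_N=\{p\in\mathbb{R}_+^N:\sum_{i=1}^Np_i=1\}$. For $g\in\Gamma_0(\mathcal{G})$ and $\lambda>0$, the proximity operator is $P_\lambda g(x)=\operatorname{argmin}_{y}\{g(y)+\frac{1}{2\lambda}\|x-y\|^2\}$. $\mathcal{H}^N$ carries the product Hilbert structure. *)

From HB Require Import structures.
From mathcomp Require Import all_boot all_order all_algebra.
From mathcomp Require Import all_classical all_reals all_analysis.
Set Implicit Arguments. Unset Strict Implicit. Unset Printing Implicit Defensive.
Import Order.TTheory GRing.Theory Num.Theory.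
Import numFieldNormedType.Exports.
Local Open Scope classical_set_scope.
Local Open Scope ring_scope.

Section Defs.
Variables (R : realType) (H : lmodType R) (ip : H -> H -> R).

Definition inner_product : Prop :=
  [/\ (forall x y, ip x y = ip y x),
      (forall (a : R) x y z, ip (a *: x + y) z = a * ip x z + ip y z)
    & (forall x, x != 0 -> 0 < ip x x)].

Definition hnorm (x : H) : R := Num.sqrt (ip x x).

Definition hcomplete : Prop :=
  forall u : nat -> H,
    (forall e : R, 0 < e -> exists M : nat, forall m n : nat,
        (M <= m)%N -> (M <= n)%N -> hnorm (u m - u n) < e) ->
    exists x : H, (fun n => hnorm (u n - x)) @ \oo --> (0 : R).

Definition hilbert : Prop := inner_product /\ hcomplete.

Definition proper_fun (f : H -> \bar R) : Prop :=
  (exists x, f x < +oo)%E /\ (forall x, f x != -oo)%E.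

Definition lsc_fun (f : H -> \bar R) : Prop :=
  forall (c : R) (u : nat -> H) (x : H),
    (forall n, (f (u n) <= c%:E)%E) ->
    (fun n => hnorm (u n - x)) @ \oo --> (0 : R) ->
    (f x <= c%:E)%E.

Definition convex_fun (f : H -> \bar R) : Prop :=
  forall (x y : H) (t : R), 0 < t < 1 ->
    (f (t *: x + (1 - t) *: y)%R <= t%:E * f x + (1 - t)%:E * f y)%E.

Definition Gamma0 (f : H -> \bar R) : Prop :=
  [/\ proper_fun f, lsc_fun f & convex_fun f].

End Defs.

Definition simplex (R : realType) (N : nat) : set ('I_N -> R) :=
  [set p | (forall i, 0 <= p i) /\ \sum_(i < N) p i = 1].

Definition convex_setN (R : realType) (N : nat) (P : set ('I_N -> R)) : Prop :=
  forall (p q : 'I_N -> R) (t : R), 0 <= t <= 1 -> P p -> P q ->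
    P (fun i => t * p i + (1 - t) * q i).

Definition closed_set (R : realType) (N : nat) (P : set ('I_N -> R)) : Prop :=
  forall (u : nat -> 'I_N -> R) (q : 'I_N -> R),
    (forall n, P (u n)) -> (forall i, (fun n => u n i) @ \oo --> q i) -> P q.

Definition sup_fun (R : realType) (H : lmodType R) (N : nat)
  (P : set ('I_N -> R)) (fs : 'I_N -> H -> \bar R) (x : 'I_N -> H) : \bar R :=
  ereal_sup [set (\sum_(i < N) ((p i)%:E * fs i (x i)))%E | p in P].

Definition argmin {R : realType} {T : Type} (F : T -> \bar R) : set T :=
  [set y | forall z, (F y <= F z)%E].

Definition argmin_in (R : realType) {T : Type} (A : set T) (F : T -> R) : set T :=
  [set y | A y /\ forall z, A z -> F y <= F z].

Definition argmax_in (R : realType) {T : Type} (A : set T) (F : T -> R) : set T :=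
  [set y | A y /\ forall z, A z -> F z <= F y].

(** proximity operator on H^N (product Hilbert structure), as the argmin set
    of  y |-> g y + 1/(2 lam) ||x - y||^2 ;  P_lam g(x) = y0  means this set is {y0}. *)
Definition prox_set (R : realType) (H : lmodType R) (ip : H -> H -> R) (N : nat)
  (g : ('I_N -> H) -> \bar R) (lam : R) (x : 'I_N -> H) : set ('I_N -> H) :=
  argmin (fun y : 'I_N -> H =>
    (g y + ((2 * lam)^-1 * \sum_(i < N) hnorm ip (x i - y i) ^+ 2)%:E)%E).

From HB Require Import structures.
From mathcomp Require Import all_boot all_order all_algebra.
From mathcomp Require Import all_classical all_reals all_analysis.
From mathcomp Require Import ring lra.
Set Implicit Arguments. Unset Strict Implicit. Unset Printing Implicit Defensive.
Import Order.TTheory GRing.Theory Num.Theory.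
Import numFieldNormedType.Exports.
Local Open Scope classical_set_scope.
Local Open Scope ring_scope.

(* Fix weights pb in P and let z minimise  y |-> sum_i pb_i f_i(y_i) + |x - y|^2/(2 lam)
   coordinatewise; this objective is (1/(2 lam))-strongly convex, so it grows
   quadratically away from z.  If moreover pb maximises p |-> sum_i p_i f_i(z_i)
   over P, then (z, pb) is a saddle point: f(y) + |x - y|^2/(2 lam) dominates the
   pb-objective, whose minimum f(z) + |x - z|^2/(2 lam) it attains at z, hence
   P_lam f(x) = z.  In both cases z is explicit in pb, and the maximisation
   condition is exactly the first-order optimality condition of pb for the
   stated problem over P: a strictly convex diagonal quadratic in (i), the
   concave function ell in (ii).  Optimal weights exist because P is compact. *)

Section InnerProduct.
Variables (R : realType) (H : lmodType R) (ip : H -> H -> R).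
Hypothesis hip : inner_product ip.

Lemma ipC x y : ip x y = ip y x.
Proof. by case: hip. Qed.

Lemma ipDl x y z : ip (x + y) z = ip x z + ip y z.
Proof. by case: hip => _ h _; have := h 1 x y z; rewrite scale1r mul1r. Qed.

Lemma ip0l z : ip 0 z = 0.
Proof. by have := ipDl 0 0 z; rewrite addr0; lra. Qed.

Lemma ipZl a x z : ip (a *: x) z = a * ip x z.
Proof. by case: hip => _ h _; rewrite -(addr0 (a *: x)) h ip0l addr0. Qed.

Lemma ipNl x z : ip (- x) z = - ip x z.
Proof. by rewrite -scaleN1r ipZl mulN1r. Qed.

Lemma ipDr x y z : ip z (x + y) = ip z x + ip z y.
Proof. by rewrite ipC ipDl !(ipC z). Qed.

Lemma ipZr a x z : ip z (a *: x) = a * ip z x.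
Proof. by rewrite ipC ipZl ipC. Qed.

Lemma ipNr x z : ip z (- x) = - ip z x.
Proof. by rewrite ipC ipNl ipC. Qed.

Lemma ip_ge0 x : 0 <= ip x x.
Proof.
have [->|x0] := eqVneq x 0; first by rewrite ip0l.
by case: hip => _ _ h; exact/ltW/h.
Qed.

Lemma ip_eq0 x : (ip x x == 0) = (x == 0).
Proof.
have [->|x0] := eqVneq x 0; first by rewrite ip0l eqxx.
by case: hip => _ _ h; rewrite gt_eqF // h.
Qed.

Lemma hnorm_sqr x : hnorm ip x ^+ 2 = ip x x.
Proof. by rewrite sqr_sqrtr // ip_ge0. Qed.

Lemma hnorm_sqr_eq0 x : (hnorm ip x ^+ 2 == 0) = (x == 0).
Proof. by rewrite hnorm_sqr ip_eq0. Qed.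

Lemma hnormZ_sqr a x : hnorm ip (a *: x) ^+ 2 = a ^+ 2 * hnorm ip x ^+ 2.
Proof. by rewrite !hnorm_sqr ipZl ipZr mulrA. Qed.

Let ipE := (hnorm_sqr, ipDl, ipDr, ipNl, ipNr, ipZl, ipZr).

Lemma prox_affine_expansion (lam s xi : R) (a x y : H) : lam != 0 ->
  let z := x - (lam * s) *: a in
  s * (ip a y + xi) + (2 * lam)^-1 * hnorm ip (x - y) ^+ 2
  = s * (ip a z + xi) + (2 * lam)^-1 * hnorm ip (x - z) ^+ 2
    + (2 * lam)^-1 * hnorm ip (y - z) ^+ 2.
Proof.
move=> lam0 z; rewrite /z !ipE ?(ipC y x) ?(ipC a x) ?(ipC a y).
by field.
Qed.

Lemma prox_sqr_dist_expansion (lam s : R) (x xi y : H) :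
  lam != 0 -> 2 * lam * s + 1 != 0 ->
  let z := (2 * lam * s + 1)^-1 *: (x + (2 * lam * s) *: xi) in
  s * hnorm ip (y - xi) ^+ 2 + (2 * lam)^-1 * hnorm ip (x - y) ^+ 2
  = s * hnorm ip (z - xi) ^+ 2 + (2 * lam)^-1 * hnorm ip (x - z) ^+ 2
    + (s + (2 * lam)^-1) * hnorm ip (y - z) ^+ 2.
Proof.
move=> lam0 den0 z; rewrite /z !ipE ?(ipC y x) ?(ipC xi x) ?(ipC xi y).
by field; rewrite den0 lam0.
Qed.

Lemma hnorm_prox_point_sqr (k : R) (x xi : H) : k + 1 != 0 ->
  hnorm ip ((k + 1)^-1 *: (x + k *: xi) - xi) ^+ 2
  = hnorm ip (x - xi) ^+ 2 / (k + 1) ^+ 2.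
Proof.
move=> k1.
rewrite [X in _ - X](_ : xi = (k + 1)^-1 *: (k *: xi + xi)); last first.
  by rewrite -[X in k *: xi + X]scale1r -scalerDl scalerA mulVf ?scale1r.
by rewrite -scalerBr opprD addrA addrK hnormZ_sqr exprVn mulrC.
Qed.

End InnerProduct.

Section Simplex.
Variables (R : realType) (N : nat).
Implicit Types (P : set ('I_N -> R)) (p q : 'I_N -> R).

Lemma simplex_convex : convex_setN (@simplex R N).
Proof.
move=> p q t /andP[t0 t1] [p0 p1] [q0 q1]; split.
  by move=> i; rewrite addr_ge0 // mulr_ge0 // subr_ge0.
by rewrite big_split /= -!mulr_sumr p1 q1; ring.
Qed.

Lemma simplex_neq0 : (0 < N)%N -> @simplex R N !=set0.
Proof.
case: N => // n _; exists (fun i => (i == ord0)%:R); split=> [i|].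
  exact: ler0n.
by rewrite (bigD1 ord0) //= ?eqxx big1 ?addr0 // => i /negPf ->.
Qed.

Lemma simplex_closed : closed_set (@simplex R N).
Proof.
move=> u q Su uq; split=> [i|].
  by apply: cvgr_to_ge (uq i) _; near=> n; case: (Su n).
have sum_cvg : (fun n => \sum_(i < N) u n i) @ \oo --> \sum_(i < N) q i.
  by apply: cvg_big => //; exact: add_continuous.
apply/le_anti/andP; split; [apply: cvgr_to_le sum_cvg _ | apply: cvgr_to_ge sum_cvg _];
  by near=> n; case: (Su n) => _ ->.
Unshelve. all: by end_near.
Qed.

Lemma simplex_coord_itv p i : simplex p -> 0 <= p i <= 1.
Proof.
move=> [p0 <-]; rewrite p0 (bigD1 i) //= lerDl.
by apply: sumr_ge0 => j _.
Qed.

Let of_row (v : 'rV[R]_N) : 'I_N -> R := fun i => v ord0 i.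

Lemma row_set_closed P : closed_set P -> closed [set v | P (of_row v)].
Proof.
move=> Pcl v clv.
have near_v n : exists w, P (of_row w) /\ forall i, `|v ord0 i - w ord0 i| < n.+1%:R^-1.
  have : nbhs v [set w | forall i, `|v ord0 i - w ord0 i| < n.+1%:R^-1].
    apply: (@filter_forall _ _ (fun i w => `|v ord0 i - w ord0 i| < n.+1%:R^-1)
      (nbhs v) _) => i.
    by move/cvgrPdist_lt: (@coord_continuous R 1 N ord0 i v); apply; rewrite invr_gt0.
  by case/clv => w [Pw vw]; exists w.
have /choice[u uP] := near_v.
apply: (Pcl (fun n => of_row (u n))) => [n|i]; first exact: (uP n).1.
apply/cvgrPdist_lt => e e0; near=> n.
apply: lt_le_trans ((uP n).2 i) _.
rewrite invf_ple ?posrE ?ltr0Sn //; apply: ltW.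
apply: (@lt_trans _ _ n%:R); last by rewrite ltr_nat.
by near: n; exact: nbhs_infty_gtr.
Unshelve. all: by end_near.
Qed.

Lemma argmin_in_neq0 P (G : ('I_N -> R) -> R) :
  P `<=` @simplex R N -> P !=set0 -> closed_set P ->
  continuous (fun v : 'rV[R]_N => G (of_row v)) -> argmin_in P G !=set0.
Proof.
move=> PS [p0 Pp0] Pcl Gc.
have rowK p : of_row (\row_i p i) = p by apply/funext => i; rewrite /of_row mxE.
have Acomp : compact [set v | P (of_row v)].
  apply: (subclosed_compact (row_set_closed Pcl)
    (rV_compact (fun=> @segment_compact R 0 1))) => v Pv i /=.
  by rewrite in_itv; exact: simplex_coord_itv (PS _ Pv).
have [|v + vmin] := EVT_min_rV _ Acomp (continuous_subspaceT Gc).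
  by exists (\row_i p0 i); rewrite /= rowK.
rewrite inE => Pv; exists (of_row v); split=> // p Pp.
by rewrite -(rowK p); apply: vmin; rewrite inE /= rowK.
Qed.

Lemma continuous_sum_coord (h : 'I_N -> R -> R) :
  (forall i, continuous (h i)) ->
  continuous (fun v : 'rV[R]_N => \sum_(i < N) h i (v ord0 i)).
Proof.
move=> hc; apply: continuous_big => [|i _ v]; first exact: add_continuous.
by apply: continuous_comp; [exact: coord_continuous | exact: hc].
Qed.

End Simplex.

Lemma ge0_of_quadratic_ge0 (R : realFieldType) (c Q : R) : 0 <= Q ->
  (forall t, 0 < t <= 1 -> 0 <= t * c + t ^+ 2 * Q) -> 0 <= c.
Proof.
move=> Q0 h; rewrite leNgt; apply/negP => c0.
have Qc : 0 < Q - c by lra.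
pose t := - c / (Q - c).
have t0 : 0 < t by rewrite divr_gt0 // oppr_gt0.
have t1 : t <= 1 by rewrite ler_pdivrMr // mul1r; lra.
have tE : t * c + t ^+ 2 * Q = - (t * (c ^+ 2 / (Q - c))).
  by rewrite /t; field; rewrite gt_eqF.
have := h t; rewrite t0 t1 tE oppr_ge0 => /(_ isT); apply/negP; rewrite -ltNge.
by rewrite mulr_gt0 // divr_gt0 // exprn_even_gt0 //= lt_eqF.
Qed.

Section FirstOrder.
Variables (R : realType) (N : nat) (P : set ('I_N -> R)) (phi : ('I_N -> R) -> R).
Hypothesis P_convex : convex_setN P.

Lemma argmin_in_first_order pb p (c Q : R) :
  argmin_in P phi pb -> P p -> 0 <= Q ->
  (forall t, 0 < t <= 1 ->
     phi (fun i => t * p i + (1 - t) * pb i) - phi pb <= t * c + t ^+ 2 * Q) ->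
  0 <= c.
Proof.
move=> [Ppb pb_min] Pp Q0 bound; apply: ge0_of_quadratic_ge0 Q0 _ => t t01.
apply: le_trans (bound t t01); rewrite subr_ge0; apply: pb_min.
by apply: P_convex => //; case/andP: t01 => /ltW -> ->.
Qed.

End FirstOrder.

Definition diag_quad (R : realType) (N : nat) (d b p : 'I_N -> R) : R :=
  2^-1 * \sum_(i < N) d i * p i ^+ 2 - \sum_(i < N) p i * b i.

Section DiagQuad.
Variables (R : realType) (N : nat) (d b : 'I_N -> R) (P : set ('I_N -> R)).
Hypotheses (d_gt0 : forall i, 0 < d i) (P_convex : convex_setN P).

Lemma diag_quadB p r : diag_quad d b p - diag_quad d b r
  = \sum_(i < N) (d i * r i - b i) * (p i - r i)
    + 2^-1 * \sum_(i < N) d i * (p i - r i) ^+ 2.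
Proof.
by rewrite /diag_quad !mulr_sumr -!sumrB -big_split; apply: eq_bigr => i _ /=; field.
Qed.

Lemma quad_form_ge0 p r : 0 <= \sum_(i < N) d i * (p i - r i) ^+ 2.
Proof. by apply: sumr_ge0 => i _; rewrite mulr_ge0 ?sqr_ge0 ?ltW. Qed.

Lemma quad_form_eq0 p r :
  \sum_(i < N) d i * (p i - r i) ^+ 2 = 0 -> p = r.
Proof.
move=> /psumr_eq0P eq0; apply/funext => i; apply/eqP; rewrite -subr_eq0.
have /eqP := eq0 (fun j _ => mulr_ge0 (ltW (d_gt0 j)) (sqr_ge0 _)) i isT.
by rewrite mulf_eq0 gt_eqF //= sqrf_eq0.
Qed.

Lemma diag_quad_first_order pb p : argmin_in P (diag_quad d b) pb -> P p ->
  0 <= \sum_(i < N) (d i * pb i - b i) * (p i - pb i).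
Proof.
move=> pb_min Pp.
have Q0 : 0 <= 2^-1 * \sum_(i < N) d i * (p i - pb i) ^+ 2.
  by rewrite mulr_ge0 ?invr_ge0 ?quad_form_ge0.
apply: (argmin_in_first_order P_convex pb_min Pp Q0) => t _.
rewrite diag_quadB !mulr_sumr le_eqVlt (_ : _ == _) //; apply/eqP.
by congr (_ + _); apply: eq_bigr => i _ /=; ring.
Qed.

Lemma diag_quad_argmin_in pb : argmin_in P (diag_quad d b) pb ->
  argmin_in P (diag_quad d b) = [set pb].
Proof.
move=> pb_min; apply/seteqP; split=> [p [Pp p_min] | _ ->] //=.
have := p_min pb pb_min.1; rewrite -subr_le0 diag_quadB.
have := diag_quad_first_order pb_min Pp.
have := quad_form_ge0 p pb.
by move=> ? ? ?; apply: quad_form_eq0; lra.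
Qed.

End DiagQuad.

Section SupFun.
Variables (R : realType) (H : lmodType R) (N : nat) (P : set ('I_N -> R)).
Variables (F : 'I_N -> H -> R) (y : 'I_N -> H).

Local Notation fs := (fun i z => (F i z)%:E).

Let weighted_sumE p :
  (\sum_(i < N) (p i)%:E * fs i (y i) = (\sum_(i < N) p i * F i (y i))%:E)%E.
Proof. by rewrite -sumEFin; apply: eq_bigr => i _; rewrite EFinM. Qed.

Lemma sup_fun_ge p : P p -> ((\sum_(i < N) p i * F i (y i))%:E <= sup_fun P fs y)%E.
Proof. by move=> Pp; apply: ereal_sup_ubound; exists p; rewrite ?weighted_sumE. Qed.

Lemma sup_fun_attained pb : P pb ->
  (forall p, P p -> \sum_(i < N) p i * F i (y i) <= \sum_(i < N) pb i * F i (y i)) ->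
  sup_fun P fs y = (\sum_(i < N) pb i * F i (y i))%:E.
Proof.
move=> Ppb pb_max; apply/le_anti; rewrite sup_fun_ge // andbT.
by apply: ge_ereal_sup => _ [p Pp <-]; rewrite weighted_sumE lee_fin pb_max.
Qed.

End SupFun.

Section Prox.
Variables (R : realType) (H : lmodType R) (ip : H -> H -> R) (N : nat).
Variables (lam : R) (x : 'I_N -> H).
Hypotheses (hip : inner_product ip) (lam_gt0 : 0 < lam).

Local Notation dist2 y z := (\sum_(i < N) hnorm ip (y i - z i) ^+ 2).

Lemma prox_set_of_growth (g : ('I_N -> H) -> \bar R) (z : 'I_N -> H) (m : R) :
  (g z + ((2 * lam)^-1 * dist2 x z)%:E = m%:E)%E ->
  (forall y, ((m + (2 * lam)^-1 * dist2 y z)%:E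
     <= g y + ((2 * lam)^-1 * dist2 x y)%:E)%E) ->
  prox_set ip g lam x = [set z].
Proof.
move=> gz growth.
have c_gt0 : 0 < (2 * lam)^-1 by rewrite invr_gt0 mulr_gt0.
have dist2_ge0 y : 0 <= dist2 y z by apply: sumr_ge0 => i _; exact: sqr_ge0.
apply/seteqP; split=> [y y_min | _ ->]; last first.
  move=> y; rewrite gz (le_trans _ (growth y)) // lee_fin lerDl.
  exact: mulr_ge0 (ltW c_gt0) (dist2_ge0 y).
have : m + (2 * lam)^-1 * dist2 y z <= m.
  by rewrite -lee_fin (le_trans (growth y)) // -gz y_min.
rewrite gerDl pmulr_rle0 // => dist2_le0.
have /psumr_eq0P dist0 : dist2 y z = 0 by apply/le_anti; rewrite dist2_le0 dist2_ge0.
apply/funext => i; apply/eqP; rewrite -subr_eq0 -(hnorm_sqr_eq0 hip) dist0 //.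
by move=> j _; exact: sqr_ge0.
Qed.

Lemma prox_sup_fun_saddle (P : set ('I_N -> R)) (F : 'I_N -> H -> R)
    (pb : 'I_N -> R) (z : 'I_N -> H) :
  P pb ->
  (forall p, P p -> \sum_(i < N) p i * F i (z i) <= \sum_(i < N) pb i * F i (z i)) ->
  (forall i y, pb i * F i (z i) + (2 * lam)^-1 * hnorm ip (x i - z i) ^+ 2
       + (2 * lam)^-1 * hnorm ip (y - z i) ^+ 2
     <= pb i * F i y + (2 * lam)^-1 * hnorm ip (x i - y) ^+ 2) ->
  prox_set ip (sup_fun P (fun i y => (F i y)%:E)) lam x = [set z].
Proof.
move=> Ppb pb_max z_min.
pose obj (y : 'I_N -> H) := \sum_(i < N) pb i * F i (y i) + (2 * lam)^-1 * dist2 x y.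
apply: (prox_set_of_growth (m := obj z)) => [|y].
  by rewrite (sup_fun_attained Ppb pb_max).
apply: le_trans (leeD2r _ (sup_fun_ge F y Ppb)); rewrite -EFinD lee_fin /obj.
by rewrite !mulr_sumr -!big_split; apply: ler_sum => i _; exact: z_min.
Qed.

End Prox.

Section Affine.
Variables (R : realType) (H : lmodType R) (ip : H -> H -> R) (N : nat).
Variables (P : set ('I_N -> R)) (x : 'I_N -> H) (lam : R).
Variables (a : 'I_N -> H) (xi : 'I_N -> R).
Hypotheses (hip : inner_product ip) (lam_gt0 : 0 < lam).
Hypotheses (P_simplex : P `<=` @simplex R N) (P_neq0 : P !=set0).
Hypotheses (P_closed : closed_set P) (P_convex : convex_setN P).
Hypothesis a_neq0 : forall i, a i != 0.

Let d i := lam * hnorm ip (a i) ^+ 2.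
Let b i := ip (a i) (x i) + xi i.

Lemma prox_sup_affine : exists pbar,
  argmin_in P (diag_quad d b) = [set pbar] /\
  prox_set ip (sup_fun P (fun i y => (ip (a i) y + xi i)%:E)) lam x
  = [set fun i => x i - (lam * pbar i) *: a i].
Proof.
have d_gt0 i : 0 < d i.
  by rewrite /d hnorm_sqr // mulr_gt0 //; case: hip => _ _; apply.
have [pb pb_min] : argmin_in P (diag_quad d b) !=set0.
  apply: (argmin_in_neq0 P_simplex P_neq0 P_closed).
  have -> : (fun v : 'rV[R]_N => diag_quad d b (fun i => v ord0 i)) =
      fun v => \sum_(i < N) (2^-1 * (d i * v ord0 i ^+ 2) - v ord0 i * b i).
    by apply/funext => v; rewrite /diag_quad mulr_sumr -sumrB.
  apply: (continuous_sum_coord (h := fun i s => 2^-1 * (d i * s ^+ 2) - s * b i)).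
  move=> i s.
  apply: cvgB; apply: cvgM; try exact: cvg_cst.
  - by apply: cvgM; [exact: cvg_cst | exact: exprn_continuous].
  - exact: cvg_id.
exists pb; split; first exact: diag_quad_argmin_in.
apply: (prox_sup_fun_saddle hip lam_gt0 pb_min.1) => [p Pp | i y].
  have zE j : ip (a j) (x j - (lam * pb j) *: a j) + xi j = b j - d j * pb j.
    by rewrite (ipDr hip) (ipNr hip) (ipZr hip) -(hnorm_sqr hip) /b /d; ring.
  rewrite -subr_ge0 -sumrB (le_trans (diag_quad_first_order d_gt0 P_convex pb_min Pp)) //.
  rewrite le_eqVlt (_ : _ == _) //; apply/eqP.
  by apply: eq_bigr => j _; rewrite zE; ring.
by rewrite (prox_affine_expansion hip (pb i) (xi i) (a i) (x i) y) ?gt_eqF.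
Qed.

End Affine.

(* Tangent-line bound at [s] for the concave map s |-> s / (1 + k s), corrected
   by a quadratic term. *)
Lemma concave_frac_bound (R : realFieldType) (k s s' al : R) :
  0 <= k -> 0 <= s -> 0 <= s' -> 0 <= al ->
  s / (1 + k * s) * al - s' / (1 + k * s') * al
  <= (s - s') * (al / (1 + k * s) ^+ 2) + k * al * (s' - s) ^+ 2 / (1 + k * s) ^+ 2.
Proof.
move=> k0 s0 s'0 al0.
have A_gt0 : 0 < 1 + k * s by rewrite ltr_pwDl // mulr_ge0.
have B_gt0 : 0 < 1 + k * s' by rewrite ltr_pwDl // mulr_ge0.
rewrite -subr_ge0.
have -> : (s - s') * (al / (1 + k * s) ^+ 2) + k * al * (s' - s) ^+ 2 / (1 + k * s) ^+ 2
    - (s / (1 + k * s) * al - s' / (1 + k * s') * al)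
    = k ^+ 2 * al * s' * (s' - s) ^+ 2 / ((1 + k * s) ^+ 2 * (1 + k * s')).
  by field; rewrite !gt_eqF.
apply: divr_ge0; last by rewrite mulr_ge0 ?sqr_ge0 // ltW.
by rewrite mulr_ge0 ?sqr_ge0 // !mulr_ge0 // sqr_ge0.
Qed.

(* The function ell of part (ii), with [al i] standing for |x_i - xi_i|^2. *)
Definition sqr_dist_dual (R : realType) (N : nat) (lam : R) (al p : 'I_N -> R) : R :=
  \sum_(i < N) p i / (1 + 2 * lam * p i) * al i.

Section SqrDist.
Variables (R : realType) (N : nat) (lam : R) (al : 'I_N -> R).
Hypotheses (lam_gt0 : 0 < lam) (al_ge0 : forall i, 0 <= al i).

Lemma sqr_dist_dual_argmax_neq0 : (0 < N)%N ->
  argmax_in (@simplex R N) (sqr_dist_dual lam al) !=set0.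
Proof.
move=> N_gt0.
(* The absolute value makes [G] continuous on all of R^N (the denominator
   vanishes at p i = - 1/(2 lam)); on the simplex [G] is [- sqr_dist_dual]. *)
pose G p := \sum_(i < N) - (p i / (1 + 2 * lam * `|p i|) * al i).
have [pb [Spb pb_min]] : argmin_in (@simplex R N) G !=set0.
  apply: (argmin_in_neq0 (@subset_refl _ _) (simplex_neq0 _ N_gt0) (@simplex_closed R N)).
  apply: (continuous_sum_coord (h := fun i s => - (s / (1 + 2 * lam * `|s|) * al i))).
  move=> i s.
  apply: cvgN; apply: cvgM; last exact: cvg_cst.
  apply: cvgM; first exact: cvg_id.
  apply: cvgV; first by rewrite gt_eqF // ltr_pwDl // mulr_ge0 // mulr_ge0 // ltW.
  apply: cvgD; first exact: cvg_cst.
  by apply: cvgM; [exact: cvg_cst | apply: cvg_norm; exact: cvg_id].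
have GE p : simplex p -> G p = - sqr_dist_dual lam al p.
  move=> [p0 _]; rewrite /G sumrN; congr (- _); apply: eq_bigr => i _.
  by rewrite ger0_norm.
by exists pb; split => // p Sp; rewrite -lerN2 -!GE // pb_min.
Qed.

Lemma sqr_dist_dual_first_order pb p :
  argmax_in (@simplex R N) (sqr_dist_dual lam al) pb -> simplex p ->
  \sum_(i < N) p i * (al i / (1 + 2 * lam * pb i) ^+ 2)
  <= \sum_(i < N) pb i * (al i / (1 + 2 * lam * pb i) ^+ 2).
Proof.
move=> [Spb pb_max] Sp.
have pb_min : argmin_in (@simplex R N) (fun q => - sqr_dist_dual lam al q) pb.
  by split=> // q Sq; rewrite lerN2 pb_max.
pose Q := \sum_(i < N) 2 * lam * al i * (p i - pb i) ^+ 2 / (1 + 2 * lam * pb i) ^+ 2.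
have Q0 : 0 <= Q.
  apply: sumr_ge0 => i _; apply: divr_ge0; last exact: sqr_ge0.
  by rewrite mulr_ge0 ?sqr_ge0 // !mulr_ge0 // ltW.
rewrite -subr_ge0 -sumrB.
apply: (argmin_in_first_order (@simplex_convex R N) pb_min Sp Q0) => t /andP[/ltW t0 t1].
rewrite opprK addrC /sqr_dist_dual -sumrB /Q !mulr_sumr -big_split; apply: ler_sum => i /= _.
have [pt0 _] : simplex (fun j => t * p j + (1 - t) * pb j).
  by apply: simplex_convex; rewrite ?t0.
apply: le_trans (concave_frac_bound _ (Spb.1 i) (pt0 i) (al_ge0 i)) _.
  by rewrite mulr_ge0 // ltW.
by rewrite le_eqVlt (_ : _ == _) //; apply/eqP; ring.
Qed.

End SqrDist.

Section SqrDistProx.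
Variables (R : realType) (H : lmodType R) (ip : H -> H -> R) (N : nat).
Variables (x xi : 'I_N -> H) (lam : R).
Hypotheses (hip : inner_product ip) (lam_gt0 : 0 < lam).

Let al i := hnorm ip (x i - xi i) ^+ 2.

Lemma prox_sup_sqr_dist pb :
  argmax_in (@simplex R N) (sqr_dist_dual lam al) pb ->
  prox_set ip (sup_fun (@simplex R N) (fun i y => (hnorm ip (y - xi i) ^+ 2)%:E)) lam x
  = [set fun i => (2 * lam * pb i + 1)^-1 *: (x i + (2 * lam * pb i) *: xi i)].
Proof.
move=> pb_max; have [[pb_ge0 _] _] := pb_max.
have den_gt0 i : 0 < 2 * lam * pb i + 1.
  by rewrite ltr_wpDl // mulr_ge0 // mulr_ge0 // ltW.
apply: (prox_sup_fun_saddle hip lam_gt0 pb_max.1) => [p Sp | i y].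
  have sumE q : \sum_(j < N) q j *
      hnorm ip ((2 * lam * pb j + 1)^-1 *: (x j + (2 * lam * pb j) *: xi j) - xi j) ^+ 2
      = \sum_(j < N) q j * (al j / (1 + 2 * lam * pb j) ^+ 2).
    by apply: eq_bigr => j _; rewrite (hnorm_prox_point_sqr hip) ?gt_eqF // [_ + 1]addrC.
  rewrite !sumE; apply: sqr_dist_dual_first_order pb_max Sp => // j.
  exact: sqr_ge0.
rewrite (prox_sqr_dist_expansion hip (x i) (xi i) y) ?gt_eqF // lerD2l.
by rewrite ler_wpM2r ?sqr_ge0 // lerDr.
Qed.

End SqrDistProx.

Theorem proposition2p1 (R : realType) (H : lmodType R) (ip : H -> H -> R)
  (N : nat) (fs : 'I_N -> H -> \bar R) (P : set ('I_N -> R))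
  (x : 'I_N -> H) (lam : R) :
  hilbert ip -> (0 < N)%N ->
  (forall i, Gamma0 ip (fs i)) ->
  P `<=` @simplex R N -> P !=set0 -> closed_set P -> convex_setN P ->
  0 < lam ->
  (* (i) affine functions *)
  (forall (a : 'I_N -> H) (xi : 'I_N -> R),
     (forall i, a i != 0) ->
     (forall i y, fs i y = (ip (a i) y + xi i)%:E) ->
     exists pbar : 'I_N -> R,
       argmin_in P (fun p : 'I_N -> R =>
          2^-1 * \sum_(i < N) (lam * hnorm ip (a i) ^+ 2) * p i ^+ 2
          - \sum_(i < N) p i * (ip (a i) (x i) + xi i)) = [set pbar]
       /\ prox_set ip (sup_fun P fs) lam x
          = [set (fun i => x i - (lam * pbar i) *: a i)])
  /\
  (* (ii) squared distances, P = Delta_N *)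
  (forall xi : 'I_N -> H,
     P = @simplex R N ->
     (forall i y, fs i y = (hnorm ip (y - xi i) ^+ 2)%:E) ->
     let ell := fun p : 'I_N -> R =>
        \sum_(i < N) p i / (1 + 2 * lam * p i) * hnorm ip (x i - xi i) ^+ 2 in
     (argmax_in (@simplex R N) ell !=set0) /\
     forall pbar : 'I_N -> R, argmax_in (@simplex R N) ell pbar ->
       prox_set ip (sup_fun P fs) lam x
       = [set (fun i => (2 * lam * pbar i + 1)^-1 *: (x i + (2 * lam * pbar i) *: xi i))]).
Proof.
move=> [hip _] N_gt0 _ P_simplex P_neq0 P_closed P_convex lam_gt0; split.
  move=> a xi a_neq0 fsE.
  have -> : fs = fun i y => (ip (a i) y + xi i)%:E.
    by apply/funext => i; apply/funext => y; exact: fsE.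
  exact: prox_sup_affine.
move=> xi -> fsE ell.
have -> : fs = fun i y => (hnorm ip (y - xi i) ^+ 2)%:E.
  by apply/funext => i; apply/funext => y; exact: fsE.
split; first exact: sqr_dist_dual_argmax_neq0.
exact: prox_sup_sqr_dist.
Qed.
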